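(* Let $\eta>0$ and $(u,v)\in\mathring C$ be such that $u/v$ is at distance at least $\eta$ from each $\mu_i$, $1\le i\le n$. Then for every $x\in\mathbb X_{u,v}$ and every $z\in\mathbb R^N$ with $\langle z,x\rangle=0=\langle z,x\rangle_{-1}$, $$\sum_{J\in\mathcal J}\frac1{|x|^4}\langle T_J(x),z\rangle^2+\sum_{i=1}^n\frac1{|x|^2}\langle R_i(x),z\rangle^2\ge c_1(\eta)|z|^2,$$ where $c_1(\eta)>0$ depends only on $\eta$, $N$ and $(\lambda_\ell)$.
   Context: Let $n\ge4$, $N=2n$, $1=\lambda_1=\lambda_2<\lambda_3=\lambda_4<\dots<\lambda_{N-1}=\lambda_N$, $\mu_i=\lambda_{2i}$. $\langle x,y\rangle=\sum x_\ell y_\ell$, $|x|^2=\sum x_\ell^2$, $\langle x,y\rangle_{-1}=\sum x_\ell y_\ell/\lambda_\ell$, $|x|_{-1}^2=\sum x_\ell^2/\lambda_\ell$. $C=\{(u,v):0\le v\le u\le\lambda_Nv\}$, interior $\mathring C$; $\mathbb X_{u,v}=\{x:|x|^2=u,|x|_{-1}^2=v\}$. $\mathcal J$ is the set of triples $J=(k,\ell,m)$ in $\{1,\dots,N\}$ with $\lambda_k<\lambda_\ell<\lambda_m$, and $T_J(x)$ is the vector $\sum x_ax_b(1/\lambda_a-1/\lambda_b)e_c$, the sum over the three cyclic permutations $(a,b,c)$ of $J$ ($e_c$ the canonical basis); $R_i(x)=x_{2i}e_{2i-1}-x_{2i-1}e_{2i}$, $1\le i\le n$. *)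

(* Vectors of R^N are represented as functions nat -> R,
   with 0-based indices; only the coordinates 0 .. N-1 are ever used
   (all sums range over l < N). *)
From HB Require Import structures.
From mathcomp Require Import all_boot all_order all_algebra.
From mathcomp Require Import reals.
Set Implicit Arguments. Unset Strict Implicit. Unset Printing Implicit Defensive.
Import Order.TTheory GRing.Theory Num.Theory.
Local Open Scope ring_scope.

Section Defs.
Variable R : realType.

Definition ip (N : nat) (x y : nat -> R) : R := \sum_(l < N) x l * y l.
Definition sqn (N : nat) (x : nat -> R) : R := ip N x x.
Definition ipm (N : nat) (lam : nat -> R) (x y : nat -> R) : R :=
  \sum_(l < N) x l * y l / lam l.
Definition sqnm (N : nat) (lam : nat -> R) (x : nat -> R) : R := ipm N lam x x.

Definition evec (c : nat) : nat -> R := fun j => (j == c)%:R.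

Definition TJ (lam : nat -> R) (k l m : nat) (x : nat -> R) : nat -> R :=
  fun j => x k * x l * ((lam k)^-1 - (lam l)^-1) * evec m j
         + x l * x m * ((lam l)^-1 - (lam m)^-1) * evec k j
         + x m * x k * ((lam m)^-1 - (lam k)^-1) * evec l j.

(* R_i(x) = x_{2i} e_{2i-1} - x_{2i-1} e_{2i} (1-based i);
   with 0-based i in 0..n-1 and 0-based coordinates this is
   x_{2i+1} e_{2i} - x_{2i} e_{2i+1}. *)
Definition Rvec (i : nat) (x : nat -> R) : nat -> R :=
  fun j => x (2 * i).+1 * evec (2 * i) j - x (2 * i) * evec (2 * i).+1 j.

End Defs.

(* Put w := Λ^{-1} x.  Then <T_J(x), z> is, up to sign, the 3x3 minor of the
   rows x, w, z on the columns J, and <R_i(x), z> is the 2x2 minor of the rows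
   x, z on the i-th eigenpair.  As z is orthogonal to x and to w, for each pair
   of columns (k, l) the squared minors over the remaining column j add up to at
   least (x_k w_l - x_l w_k)^2 |z|^2.  By Lagrange's identity for x and
   w - (v/u) x, which is orthogonal to x, the sum of (x_k w_l - x_l w_k)^2 over
   the pairs with λ_k < λ_l is u |w - (v/u) x|^2 >= u^2 η^2 / λ_N^4, because
   |1/λ_l - v/u| >= η / λ_N^2 for every l.  Finally a minor on columns (j, k, l)
   with λ_k < λ_l either has three distinct levels, and is then one of the
   <T_J(x), z>, or has two columns in one eigenpair, and is then at most |x_l|
   times one of the <R_i(x), z>. *)

From HB Require Import structures.
From mathcomp Require Import all_boot all_order all_algebra.
From mathcomp Require Import reals.
From mathcomp.algebra_tactics Require Import ring lra.
From mathcomp Require Import zify.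
Set Implicit Arguments. Unset Strict Implicit. Unset Printing Implicit Defensive.
Import Order.TTheory GRing.Theory Num.Theory.
Local Open Scope ring_scope.

Section Minors.
Variable R : comPzRingType.
Implicit Types x y z : nat -> R.

Definition minor2 x y (k l : nat) : R := x k * y l - x l * y k.

Definition minor3 x y z (j k l : nat) : R :=
  x j * minor2 y z k l - x k * minor2 y z j l + x l * minor2 y z j k.

Lemma minor2C x y k l : minor2 x y l k = - minor2 x y k l.
Proof. rewrite /minor2; ring. Qed.

Lemma minor2_subr_scale x y s k l :
  minor2 x (fun i => y i - s * x i) k l = minor2 x y k l.
Proof. rewrite /minor2; ring. Qed.

Lemma minor3E x y z j k l :
  minor3 x y z j k l =
  minor2 x y k l * z j + minor2 y z k l * x j - minor2 x z k l * y j.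
Proof. rewrite /minor3 /minor2; ring. Qed.

Lemma minor3_swap12 x y z j k l : minor3 x y z k j l = - minor3 x y z j k l.
Proof. rewrite /minor3 /minor2; ring. Qed.

Lemma minor3_swap23 x y z j k l : minor3 x y z j l k = - minor3 x y z j k l.
Proof. rewrite /minor3 /minor2; ring. Qed.

Lemma minor3_rot x y z j k l : minor3 x y z k l j = minor3 x y z j k l.
Proof. rewrite /minor3 /minor2; ring. Qed.

End Minors.

Section DivLam.
Variable R : fieldType.
Implicit Types lam x z : nat -> R.

Definition divlam lam x (l : nat) : R := x l / lam l.

Lemma minor2_divlam_eq lam x k l :
  lam k = lam l -> minor2 x (divlam lam x) k l = 0.
Proof. by move=> e; rewrite /minor2 /divlam e; ring. Qed.

Lemma minor3_divlam_eq lam x z j k l : lam j = lam k ->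
  minor3 x (divlam lam x) z j k l =
  x l * ((lam k)^-1 - (lam l)^-1) * minor2 x z j k.
Proof. by move=> e; rewrite /minor3 /minor2 /divlam e; ring. Qed.

End DivLam.

Lemma lt_indicator_split (R : realFieldType) (a b c D A B : R) :
  0 <= D -> 0 <= A -> 0 <= B -> (a = b -> D <= A) -> (a = c -> D <= B) ->
  (if b < c then D else 0) <=
    (if (a < b) && (b < c) then D else 0) + (if (b < a) && (a < c) then D else 0)
  + (if (b < c) && (c < a) then D else 0)
  + (if a == b then A else 0) + (if a == c then B else 0).
Proof.
move=> D0 A0 B0 DA DB.
case: (ltrgtP a b) => ab; case: (ltrgtP a c) => ac; case: (ltrgtP b c) => bc /=.
all: try (move: (DA ab) => ?); try (move: (DB ac) => ?).
all: try lra.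
all: subst; rewrite ?ltxx ?eqxx /=; lra.
Qed.

Lemma inv_sub_ratio_gap (R : realFieldType) (u v m L eta : R) :
  0 < v -> v < u -> u < L * v -> 1 <= m -> m <= L -> eta <= `|u / v - m| ->
  0 <= eta -> (eta / L ^+ 2) ^+ 2 <= (m^-1 - v / u) ^+ 2.
Proof.
move=> v0 vu uL m1 mL eta_le eta0.
have [u0 m0 L0] : [/\ 0 < u, 0 < m & 0 < L] by split; lra.
have scale : (L ^+ 2)^-1 <= v / (m * u).
  rewrite ler_pdivlMr ?mulr_gt0 // mulrC ler_pdivrMr ?exprn_gt0 //; nra.
have e : m^-1 - v / u = (u / v - m) * (v / (m * u)).
  by field; rewrite ?gt_eqF ?mulr_gt0.
have : eta / L ^+ 2 <= `|m^-1 - v / u|.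
  have B0 : 0 <= v / (m * u) by apply/ltW/divr_gt0 => //; exact: mulr_gt0.
  rewrite e normrM [`|v / _|]ger0_norm //.
  move: scale B0; set I := (L ^+ 2)^-1; set B := v / (m * u); nra.
rewrite -(real_normK (num_real (m^-1 - v / u))).
have : 0 <= eta / L ^+ 2 by rewrite divr_ge0 // exprn_ge0 // ltW.
nra.
Qed.

Lemma sum_ord_pairs (V : nmodType) (n : nat) (f : nat -> V) :
  \sum_(j < 2 * n) f j = \sum_(i < n) (f (2 * i)%N + f (2 * i).+1).
Proof.
elim: n => [|n IH]; first by rewrite muln0 !big_ord0.
by rewrite mulnS !big_ord_recr /= IH addrA.
Qed.

Section InnerProducts.
Variables (R : realType) (N : nat).
Implicit Types (lam x y z : nat -> R).

Lemma sum_evec_mul (m : nat) (f : nat -> R) : (m < N)%N ->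
  \sum_(j < N) evec R m j * f j = f m.
Proof.
move=> mN; rewrite (bigD1 (Ordinal mN)) //= big1 => [|j jm].
  by rewrite /evec eqxx mul1r addr0.
by rewrite /evec (negbTE (jm : (j : nat) != m)) mul0r.
Qed.

Lemma ip_TJ lam x z (k l m : nat) : (k < N)%N -> (l < N)%N -> (m < N)%N ->
  ip N (TJ lam k l m x) z = - minor3 x (divlam lam x) z k l m.
Proof.
move=> kN lN mN; rewrite /ip /TJ.
under eq_bigr => j _ do rewrite !mulrDl -!(mulrA _ (evec R _ j)).
rewrite !big_split /= -!mulr_sumr !sum_evec_mul //.
rewrite /minor3 /minor2 /divlam; ring.
Qed.

Lemma ip_Rvec x z (i : nat) : ((2 * i).+1 < N)%N ->
  ip N (Rvec i x) z = minor2 x z (2 * i).+1 (2 * i).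
Proof.
move=> iN; have iN' : (2 * i < N)%N by apply: ltnW.
rewrite /ip /Rvec.
under eq_bigr => j _ do rewrite mulrBl -!(mulrA _ (evec R _ j)).
by rewrite sumrB -!mulr_sumr !sum_evec_mul.
Qed.

Lemma ipm_divlam lam x y : ipm N lam x y = ip N x (divlam lam y).
Proof. by apply: eq_bigr => l _; rewrite mulrA. Qed.

Lemma sqnE x : sqn N x = \sum_(l < N) x l ^+ 2.
Proof. by []. Qed.

Lemma sqn_ge0 x : 0 <= sqn N x.
Proof. by apply: sumr_ge0 => l _; rewrite -expr2 sqr_ge0. Qed.

Lemma sum_sq_minor2 x y :
  \sum_(k < N) \sum_(l < N) minor2 x y k l ^+ 2 =
  2 * (sqn N x * sqn N y - ip N x y ^+ 2).
Proof.
have e k l : minor2 x y k l ^+ 2 =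
  x k * x k * (y l * y l) + y k * y k * (x l * x l) - 2 * (x k * y k * (x l * y l)).
  by rewrite /minor2; ring.
under eq_bigr => k _ do under eq_bigr => l _ do rewrite e.
rewrite /sqn /ip expr2 !mulr_suml.
under eq_bigr => k _ do rewrite !sumrB !big_split /= -!mulr_sumr.
rewrite !sumrB !big_split /= -!mulr_sumr -!mulr_suml; ring.
Qed.

Lemma minor2_sq_sqn_le x y z k l : ip N z x = 0 -> ip N z y = 0 ->
  minor2 x y k l ^+ 2 * sqn N z <= \sum_(j < N) minor3 x y z j k l ^+ 2.
Proof.
move=> zx zy; set a := minor2 x y k l; set b := minor2 y z k l.
set c := minor2 x z k l.
have e j : minor3 x y z j k l ^+ 2 =
    a ^+ 2 * (z j * z j) + (b * x j - c * y j) ^+ 2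
    + 2 * a * b * (z j * x j) - 2 * a * c * (z j * y j).
  by rewrite minor3E -/a -/b -/c; ring.
under eq_bigr => j _ do rewrite e.
rewrite sumrB !big_split /= -!mulr_sumr.
rewrite -[\sum_(j < N) z j * x j]/(ip N z x) -[\sum_(j < N) z j * y j]/(ip N z y).
rewrite zx zy !mulr0 addr0 subr0 lerDl.
by apply: sumr_ge0 => j _; exact: sqr_ge0.
Qed.

End InnerProducts.

Section Levels.
Variables (R : realType) (N : nat) (lam : nat -> R).
Implicit Types x z : nat -> R.

Definition ordered_triples_sum x z :=
  \sum_(a < N) \sum_(b < N) \sum_(c < N)
    (if (lam a < lam b) && (lam b < lam c)
     then minor3 x (divlam lam x) z a b c ^+ 2 else 0).

Definition same_level_sum x z :=
  \sum_(j < N) \sum_(k < N) (if lam j == lam k then minor2 x z j k ^+ 2 else 0).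

Definition ordered_pairs_sum x :=
  \sum_(k < N) \sum_(l < N)
    (if lam k < lam l then minor2 x (divlam lam x) k l ^+ 2 else 0).

Lemma ordered_triples_sum_ge0 x z : 0 <= ordered_triples_sum x z.
Proof.
apply: sumr_ge0 => a _; apply: sumr_ge0 => b _; apply: sumr_ge0 => c _.
by case: ifP => _; rewrite ?sqr_ge0.
Qed.

Lemma sum_sq_ip_TJ x z (c : R) :
  \sum_(k < N) \sum_(l < N) \sum_(m < N | (lam k < lam l) && (lam l < lam m))
     (ip N (TJ lam k l m x) z) ^+ 2 / c = ordered_triples_sum x z / c.
Proof.
rewrite mulr_suml; apply: eq_bigr => k _; rewrite mulr_suml; apply: eq_bigr => l _.
rewrite mulr_suml big_mkcond; apply: eq_bigr => m _ /=.
by case: ifP => _; rewrite ?mul0r // ip_TJ // sqrrN.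
Qed.

Lemma sum_sq_minor2_divlam x :
  \sum_(k < N) \sum_(l < N) minor2 x (divlam lam x) k l ^+ 2 =
  2 * ordered_pairs_sum x.
Proof.
have e k l : minor2 x (divlam lam x) k l ^+ 2 =
    (if lam k < lam l then minor2 x (divlam lam x) k l ^+ 2 else 0)
  + (if lam l < lam k then minor2 x (divlam lam x) l k ^+ 2 else 0).
  case: ltrgtP => [_|_|e]; first by rewrite addr0.
    by rewrite add0r minor2C sqrrN.
  by rewrite minor2_divlam_eq // expr0n addr0.
under eq_bigr => k _ do under eq_bigr => l _ do rewrite e.
under eq_bigr => k _ do rewrite big_split /=.
by rewrite big_split /= [X in _ + X]exchange_big /= mulr_natl mulr2n.
Qed.

(* Lagrange's identity for x and w - s x, where w := divlam lam x; the
   hypothesis on s makes w - s x orthogonal to x. *)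
Lemma ordered_pairs_sum_ge x s d :
  sqnm N lam x = s * sqn N x ->
  (forall l, (l < N)%N -> d <= ((lam l)^-1 - s) ^+ 2) ->
  d * sqn N x ^+ 2 <= ordered_pairs_sum x.
Proof.
move=> xv gap; pose y l := divlam lam x l - s * x l.
have xy : ip N x y = 0.
  have -> : ip N x y = sqnm N lam x - s * sqn N x.
    rewrite /ip /sqnm /ipm /sqn mulr_sumr -sumrB.
    by apply: eq_bigr => l _; rewrite /y /divlam; ring.
  by rewrite xv subrr.
have yd : d * sqn N x <= sqn N y.
  rewrite !sqnE mulr_sumr; apply: ler_sum => l _.
  have -> : y l ^+ 2 = x l ^+ 2 * ((lam l)^-1 - s) ^+ 2 by rewrite /y /divlam; ring.
  by rewrite mulrC; apply: ler_wpM2l; [exact: sqr_ge0 | exact: gap].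
have : 2 * (d * sqn N x ^+ 2) <= 2 * ordered_pairs_sum x.
  rewrite -sum_sq_minor2_divlam.
  under eq_bigr => k _ do under eq_bigr => l _ do rewrite -(minor2_subr_scale _ _ s).
  by rewrite sum_sq_minor2 xy; have := sqn_ge0 N x; nra.
by rewrite ler_pM2l.
Qed.

Lemma ordered_pairs_sum_minor3_le x z : ip N z x = 0 -> ipm N lam z x = 0 ->
  sqn N z * ordered_pairs_sum x <=
  \sum_(j < N) \sum_(k < N) \sum_(l < N)
    (if lam k < lam l then minor3 x (divlam lam x) z j k l ^+ 2 else 0).
Proof.
move=> zx zw; rewrite ipm_divlam in zw.
rewrite exchange_big /=; under eq_bigr => k _ do rewrite exchange_big /=.
rewrite mulr_sumr; apply: ler_sum => k _; rewrite mulr_sumr; apply: ler_sum => l _.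
case: ifP => _; last by rewrite mulr0 big1.
by rewrite mulrC; apply: minor2_sq_sqn_le.
Qed.

Hypothesis lam_ge1 : forall l, (l < N)%N -> 1 <= lam l.

Lemma sq_minor3_level_le x z j k l : (k < N)%N -> (l < N)%N -> lam j = lam k ->
  minor3 x (divlam lam x) z j k l ^+ 2 <= x l ^+ 2 * minor2 x z j k ^+ 2.
Proof.
move=> kN lN jk; rewrite minor3_divlam_eq // !exprMn.
have [k1 l1] := (lam_ge1 kN, lam_ge1 lN).
have [k0 l0] : 0 < (lam k)^-1 /\ 0 < (lam l)^-1 by rewrite !invr_gt0; lra.
have [k1' l1'] : (lam k)^-1 <= 1 /\ (lam l)^-1 <= 1 by rewrite !invf_le1; lra.
have : ((lam k)^-1 - (lam l)^-1) ^+ 2 <= 1 by nra.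
have := sqr_ge0 (x l); have := sqr_ge0 (minor2 x z j k); nra.
Qed.

Lemma sq_minor3_lt_split x z j k l : (j < N)%N -> (k < N)%N -> (l < N)%N ->
  (if lam k < lam l then minor3 x (divlam lam x) z j k l ^+ 2 else 0) <=
    (if (lam j < lam k) && (lam k < lam l)
     then minor3 x (divlam lam x) z j k l ^+ 2 else 0)
  + (if (lam k < lam j) && (lam j < lam l)
     then minor3 x (divlam lam x) z k j l ^+ 2 else 0)
  + (if (lam k < lam l) && (lam l < lam j)
     then minor3 x (divlam lam x) z k l j ^+ 2 else 0)
  + (if lam j == lam k then x l ^+ 2 * minor2 x z j k ^+ 2 else 0)
  + (if lam j == lam l then x k ^+ 2 * minor2 x z j l ^+ 2 else 0).
Proof.
move=> jN kN lN.
rewrite (minor3_swap12 _ _ _ j k l) sqrrN (minor3_rot _ _ _ j k l).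
apply: lt_indicator_split; first exact: sqr_ge0.
- by rewrite mulr_ge0 ?sqr_ge0.
- by rewrite mulr_ge0 ?sqr_ge0.
- exact: sq_minor3_level_le.
- by move=> jl; rewrite -sqrrN -minor3_swap23; apply: sq_minor3_level_le.
Qed.

Lemma sum_lt_minor3_le x z :
  \sum_(j < N) \sum_(k < N) \sum_(l < N)
    (if lam k < lam l then minor3 x (divlam lam x) z j k l ^+ 2 else 0)
  <= 3 * ordered_triples_sum x z + 2 * sqn N x * same_level_sum x z.
Proof.
apply: le_trans.
  apply: ler_sum => j _; apply: ler_sum => k _; apply: ler_sum => l _.
  exact: sq_minor3_lt_split.
under eq_bigr => j _ do under eq_bigr => k _ do rewrite !big_split /=.
under eq_bigr => j _ do rewrite !big_split /=.
rewrite !big_split /=.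
have -> : \sum_(j < N) \sum_(k < N) \sum_(l < N)
    (if (lam k < lam j) && (lam j < lam l)
     then minor3 x (divlam lam x) z k j l ^+ 2 else 0) = ordered_triples_sum x z.
  exact: exchange_big.
have -> : \sum_(j < N) \sum_(k < N) \sum_(l < N)
    (if (lam k < lam l) && (lam l < lam j)
     then minor3 x (divlam lam x) z k l j ^+ 2 else 0) = ordered_triples_sum x z.
  by rewrite exchange_big; apply: eq_bigr => k _; exact: exchange_big.
have level : \sum_(j < N) \sum_(k < N) \sum_(l < N)
    (if lam j == lam k then x l ^+ 2 * minor2 x z j k ^+ 2 else 0)
    = sqn N x * same_level_sum x z.
  rewrite mulr_sumr; apply: eq_bigr => j _; rewrite mulr_sumr; apply: eq_bigr => k _.
  by case: ifP => _; [rewrite -mulr_suml | rewrite mulr0 big1].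
have -> : \sum_(j < N) \sum_(k < N) \sum_(l < N)
    (if lam j == lam l then x k ^+ 2 * minor2 x z j l ^+ 2 else 0)
    = sqn N x * same_level_sum x z.
  by rewrite -level; apply: eq_bigr => j _; exact: exchange_big.
by rewrite level -/(ordered_triples_sum x z); lra.
Qed.

Lemma sqn_mul_ordered_pairs_sum_le x z : ip N z x = 0 -> ipm N lam z x = 0 ->
  sqn N z * ordered_pairs_sum x <=
  3 * ordered_triples_sum x z + 2 * sqn N x * same_level_sum x z.
Proof.
by move=> zx zw; apply: le_trans (ordered_pairs_sum_minor3_le zx zw) _;
  exact: sum_lt_minor3_le.
Qed.

End Levels.

Section EigenPairs.
Variables (R : realType) (n : nat) (lam : nat -> R).
Hypothesis lam_pair : forall i, (i < n)%N -> lam (2 * i)%N = lam (2 * i).+1.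
Hypothesis lam_step : forall i, (i.+1 < n)%N -> lam (2 * i).+1 < lam (2 * i).+2.

Lemma lam_half j : (j < 2 * n)%N -> lam j = lam (2 * (j %/ 2)).+1.
Proof.
move=> jn; have [e|e] : j = (2 * (j %/ 2)).+1 \/ j = (2 * (j %/ 2))%N by lia.
  by rewrite {1}e.
by rewrite {1}e lam_pair //; lia.
Qed.

Lemma le_lam j k : (j < 2 * n)%N -> (k < 2 * n)%N ->
  (lam j <= lam k) = (j %/ 2 <= k %/ 2)%N.
Proof.
move=> jn kn; rewrite (lam_half jn) (lam_half kn).
have mono : {in gtn n &,
    {mono (fun i => lam (2 * i).+1) : i j / (i <= j)%N >-> i <= j}}.
  apply: Order.NatMonotonyTheory.incn_inP => [a b|i].
    by move=> _ + c /andP[_ cb]; rewrite !inE; lia.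
  rewrite !inE => _ iSn; rewrite -(lam_pair iSn).
  by rewrite (_ : (2 * i.+1)%N = (2 * i).+2) ?lam_step //; lia.
by rewrite mono // inE; lia.
Qed.

Lemma eq_lam j k : (j < 2 * n)%N -> (k < 2 * n)%N ->
  (lam j == lam k) = (j %/ 2 == k %/ 2)%N.
Proof. by move=> jn kn; rewrite eq_le !le_lam // eqn_leq. Qed.

Lemma lam_bounds j : (j < 2 * n)%N -> lam 0%N <= lam j /\ lam j <= lam (2 * n).-1.
Proof. by move=> jn; rewrite !le_lam; lia. Qed.

Lemma same_level_sum_pairs x z :
  same_level_sum (2 * n) lam x z =
  2 * \sum_(i < n) minor2 x z (2 * i).+1 (2 * i) ^+ 2.
Proof.
pose F j k := if lam j == lam k then minor2 x z j k ^+ 2 else 0.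
rewrite [LHS](sum_ord_pairs _ (fun j => \sum_(k < 2 * n) F j k)) mulr_sumr.
apply: eq_bigr => i _; have iS := ltn_ord i.
rewrite (sum_ord_pairs _ (F (2 * i)%N)) (sum_ord_pairs _ (F (2 * i).+1)) -big_split /=.
rewrite (bigD1 i) //= big1 => [|c ci].
  rewrite /F !eqxx lam_pair // eqxx minor2C sqrrN /minor2; ring.
have cS := ltn_ord c.
have ic : (nat_of_ord i == c) = false by rewrite eq_sym; exact: negbTE.
have div2 m : ((2 * m) %/ 2 = m /\ (2 * m).+1 %/ 2 = m)%N by lia.
rewrite /F !eq_lam; try lia.
by rewrite !(proj1 (div2 _)) !(proj2 (div2 _)) ic !addr0.
Qed.

End EigenPairs.

Lemma sum_sq_ip_Rvec (R : realType) (n : nat) (x z : nat -> R) (c : R) :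
  \sum_(i < n) (ip (2 * n) (Rvec i x) z) ^+ 2 / c =
  (\sum_(i < n) minor2 x z (2 * i).+1 (2 * i) ^+ 2) / c.
Proof.
rewrite mulr_suml; apply: eq_bigr => i _; rewrite ip_Rvec //.
by have := ltn_ord i; lia.
Qed.

Unset Implicit Arguments.

Theorem propositionA3 (R : realType) (n : nat) (lam : nat -> R) :
  (4 <= n)%N ->
  lam 0%N = 1 ->
  (forall i : nat, (i < n)%N -> lam (2 * i)%N = lam (2 * i).+1) ->
  (forall i : nat, (i.+1 < n)%N -> lam (2 * i).+1 < lam (2 * i).+2) ->
  forall eta : R, 0 < eta ->
  exists c1 : R, 0 < c1 /\
    forall u v : R,
      (0 < v /\ v < u /\ u < lam (2 * n).-1 * v) ->
      (forall i : nat, (i < n)%N -> eta <= `| u / v - lam (2 * i).+1 |) ->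
      forall x : nat -> R,
        sqn (2 * n) x = u -> sqnm (2 * n) lam x = v ->
      forall z : nat -> R,
        ip (2 * n) z x = 0 -> ipm (2 * n) lam z x = 0 ->
        (\sum_(k < 2 * n) \sum_(l < 2 * n)
           \sum_(m < 2 * n | (lam k < lam l) && (lam l < lam m))
             (ip (2 * n) (TJ lam k l m x) z) ^+ 2 / (sqn (2 * n) x) ^+ 2)
        + (\sum_(i < n) (ip (2 * n) (Rvec i x) z) ^+ 2 / sqn (2 * n) x)
        >= c1 * sqn (2 * n) z.
Proof.
move=> n_ge4 lam0 lam_pair lam_step eta eta0; set L := lam (2 * n).-1.
have lam_range l : (l < 2 * n)%N -> 1 <= lam l /\ lam l <= L.
  by rewrite -lam0; exact: lam_bounds.
have L1 : 1 <= L by have [] := lam_range (2 * n).-1 ltac:(lia).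
set d := (eta / L ^+ 2) ^+ 2.
have d0 : 0 < d by rewrite exprn_gt0 // divr_gt0 // exprn_gt0 //; lra.
exists (d / 4); split; first by rewrite divr_gt0.
move=> u v [v0 [vu uL]] eta_le x xu xv z zx zxm; have u0 : 0 < u by lra.
rewrite sum_sq_ip_TJ sum_sq_ip_Rvec xu.
set T := ordered_triples_sum _ _ _ _; set S := \sum_(i < n) _.
have P_ge : d * u ^+ 2 <= ordered_pairs_sum (2 * n) lam x.
  rewrite -xu; apply: (ordered_pairs_sum_ge (s := v / u)); first by rewrite xu xv; field; lra.
  move=> l ln; have [l1 lL] := lam_range l ln.
  apply: inv_sub_ratio_gap => //; last exact: ltW.
  by rewrite (lam_half lam_pair ln); apply: eta_le; lia.
have P_le : sqn (2 * n) z * ordered_pairs_sum (2 * n) lam x <= 3 * T + 4 * u * S.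
  apply: le_trans (sqn_mul_ordered_pairs_sum_le _ zx zxm) _ => [l ln|].
    by have [] := lam_range l ln.
  by rewrite same_level_sum_pairs // xu -/T -/S; lra.
have T0 : 0 <= T by exact: ordered_triples_sum_ge0.
have S0 : 0 <= S by apply: sumr_ge0 => i _; exact: sqr_ge0.
have := sqn_ge0 (2 * n) z.
rewrite (_ : T / u ^+ 2 + S / u = (T + u * S) / u ^+ 2); last by field; lra.
rewrite ler_pdivlMr ?exprn_gt0 //; nra.
Qed.
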